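(* Let $T$ be an integral domain of the form $T=K+M$, where $K$ is a subfield of $T$ and $M$ is a nonzero maximal ideal of $T$. Let $D$ be a subring of $K$ and $R=D+M$. Then: (1) If $D$ is a field, then $R$ is a completely atomic domain if and only if $T$ is a completely atomic domain. (2) If $D$ is not a field, $D$ is atomic, and $T$ is completely atomic, then $R$ is a completely atomic domain.
   Context: An atom (irreducible element) of an integral domain is a nonzero nonunit $a$ such that $a=bc$ implies $b$ or $c$ is a unit. A nonzero nonunit is atomic if it is a finite product of atoms; a domain is atomic if every nonzero nonunit is atomic. A domain is completely atomic if every nonunit divisor of an atomic element is atomic. *)

From HB Require Import structures.
From mathcomp Require Import all_boot all_order all_algebra.
Set Implicit Arguments. Unset Strict Implicit. Unset Printing Implicit Defensive.
Import GRing.Theory.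
Local Open Scope ring_scope.

(* Subsets of an integral domain T are represented as Prop predicates T -> Prop.
   A subring S of T is itself an integral domain; all divisibility notions
   (units, atoms, atomicity) are taken INSIDE S. *)

Section Defs.
Variable T : idomainType.
Implicit Types (S : T -> Prop).

Definition is_subring S : Prop :=
  [/\ S 1, (forall x y, S x -> S y -> S (x - y)) & (forall x y, S x -> S y -> S (x * y))].

Definition is_field S : Prop :=
  forall x, S x -> x != 0 -> exists2 y, S y & x * y = 1.

Definition is_subfield S : Prop := is_subring S /\ is_field S.

Definition is_ideal (I : T -> Prop) : Prop :=
  [/\ I 0, (forall x y, I x -> I y -> I (x + y)) & (forall r x, I x -> I (r * x))].

Definition is_maximal_ideal (M : T -> Prop) : Prop :=
  [/\ is_ideal M, ~ M 1 &
      forall I, is_ideal I -> (forall x, M x -> I x) -> I 1 \/ (forall x, I x -> M x)].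

Definition set_add (A B : T -> Prop) : T -> Prop :=
  fun x => exists a b, [/\ A a, B b & x = a + b].

Definition unit_in S (x : T) : Prop := S x /\ exists2 y, S y & x * y = 1.

Definition atom_in S (a : T) : Prop :=
  [/\ S a, a != 0, ~ unit_in S a &
      forall b c, S b -> S c -> a = b * c -> unit_in S b \/ unit_in S c].

Definition atomic_elt_in S (x : T) : Prop :=
  [/\ S x, x != 0, ~ unit_in S x &
      exists s : seq T, [/\ s != [::], (forall a, a \in s -> atom_in S a)
                                     & x = \prod_(a <- s) a]].

Definition atomic_domain S : Prop :=
  forall x, S x -> x != 0 -> ~ unit_in S x -> atomic_elt_in S x.

Definition completely_atomic S : Prop :=
  forall x y, atomic_elt_in S x -> S y -> ~ unit_in S y ->
    (exists2 z, S z & x = y * z) -> atomic_elt_in S y.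

End Defs.

From Stdlib Require Import Classical ClassicalEpsilon.
From Stdlib Require Import FunctionalExtensionality PropExtensionality.
From HB Require Import structures.
From mathcomp Require Import all_boot all_order all_algebra ring.
Import GRing.Theory.
Local Open Scope ring_scope.

(* Let res : T -> K be the residue map along T = K + M.  It is multiplicative
   with kernel M, and R = D + M is the preimage of D.  Every x with res x <> 0
   is res x * x1 with res x1 = 1; elements of residue 1 lie in R, and for them
   being a unit or an atom means the same in R as in T.  A product b * c lying
   in R can be rebalanced as (k * b) * (k^-1 * c) with both factors in R, for
   some nonzero k in K.

   If D is a field, the units of R are its T-units, so by rebalancing the atoms
   and atomic elements of R are those of T lying in R; complete atomicity then
   transfers both ways after scaling divisors into R by units of K.

   If D is not a field, no atom a of R lies in M (else a = d * (d^-1 * a) for a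
   nonzero nonunit d of D), so an atomic x of R has res x <> 0 and is a unit
   times atoms in T.  A nonunit divisor y of x in R is res y * y1: res y is a
   unit or a product of atoms of D, which remain atoms of R, and y1 divides x
   in T, hence is a unit times atoms of T by complete atomicity of T; these
   atoms, normalised to residue 1, are atoms of R. *)

Set Implicit Arguments.
Unset Strict Implicit.
Unset Printing Implicit Defensive.

Section Factorization.
Variables (T : idomainType) (S : T -> Prop).

Definition mul_closed : Prop := S 1 /\ forall x y, S x -> S y -> S (x * y).

Definition factorable_in (x : T) : Prop := exists u (s : seq T),
  [/\ unit_in S u, forall a, a \in s -> atom_in S a & x = u * \prod_(a <- s) a].

Lemma unit_in_neq0 u : unit_in S u -> u != 0.
Proof.
move=> [_ [v _ uv]]; have uu : u \is a GRing.unit by apply/unitrPr; exists v.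
by apply: contraTneq uu => ->; rewrite unitr0.
Qed.

Lemma unit_inV u : unit_in S u -> exists2 v, unit_in S v & v * u = 1.
Proof.
move=> [Su [v Sv uv]]; exists v; last by rewrite mulrC.
by split=> //; exists u; rewrite // mulrC.
Qed.

Lemma factorable_unit u : unit_in S u -> factorable_in u.
Proof. by move=> Su_u; exists u, [::]; rewrite big_nil mulr1. Qed.

Hypothesis S_closed : mul_closed.
Let S1 : S 1. Proof. by case: S_closed. Qed.
Let SM x y : S x -> S y -> S (x * y). Proof. by case: S_closed => _; apply. Qed.

Lemma unit_in1 : unit_in S 1.
Proof. by split=> //; exists 1; rewrite ?mulr1. Qed.

Lemma unit_inM u v : unit_in S u -> unit_in S v -> unit_in S (u * v).
Proof.
move=> [Su [u' Su' uu']] [Sv [v' Sv' vv']]; split; first exact: SM.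
by exists (u' * v'); [exact: SM | rewrite mulrACA uu' vv' mulr1].
Qed.

Lemma unit_inMl a b : S a -> S b -> unit_in S (a * b) -> unit_in S a.
Proof.
by move=> Sa Sb [_ [w Sw abw]]; split=> //; exists (b * w); [exact: SM | rewrite mulrA].
Qed.

Lemma atom_in_unitM u a : unit_in S u -> atom_in S a -> atom_in S (u * a).
Proof.
move=> Su_u [Sa a0 a_nu a_irr]; have [v Su_v vu] := unit_inV Su_u.
split.
- exact: SM (proj1 Su_u) Sa.
- by rewrite mulf_neq0 // (unit_in_neq0 Su_u).
- move=> Su_ua; apply: a_nu.
  by have := unit_inM Su_v Su_ua; rewrite mulrA vu mul1r.
- move=> b c Sb Sc uabc.
  have : a = (v * b) * c by rewrite -mulrA -uabc mulrA vu mul1r.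
  case/(a_irr _ _ (SM (proj1 Su_v) Sb) Sc) => [Su_vb|]; [left|by right].
  by have := unit_inM Su_u Su_vb; rewrite mulrA (mulrC u) vu mul1r.
Qed.

Lemma factorable_atom a : atom_in S a -> factorable_in a.
Proof.
move=> Sa_a; exists 1, [:: a]; split; first exact: unit_in1.
- by move=> b; rewrite inE => /eqP ->.
- by rewrite big_seq1 mul1r.
Qed.

Lemma factorable_mul x y : factorable_in x -> factorable_in y -> factorable_in (x * y).
Proof.
move=> [u [s [Su_u s_atoms ->]]] [v [t [Su_v t_atoms ->]]].
exists (u * v), (s ++ t); split; first exact: unit_inM.
  by move=> a; rewrite mem_cat => /orP[/s_atoms|/t_atoms].
by rewrite big_cat mulrACA.
Qed.

Lemma factorable_prod (s : seq T) :
  (forall a, a \in s -> factorable_in a) -> factorable_in (\prod_(a <- s) a).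
Proof.
rewrite big_seq; apply: big_ind; [exact: factorable_unit unit_in1 | exact: factorable_mul].
Qed.

Lemma atomic_factorable x : atomic_elt_in S x -> factorable_in x.
Proof.
by move=> [_ _ _ [s [_ s_atoms ->]]]; exists 1, s; rewrite mul1r; split=> //; exact: unit_in1.
Qed.

Lemma factorable_atomic x : factorable_in x -> ~ unit_in S x -> atomic_elt_in S x.
Proof.
move=> [u [[|a s] [Su_u s_atoms ->]]] x_nu.
  by case: x_nu; rewrite big_nil mulr1.
have Ex : u * \prod_(b <- a :: s) b = \prod_(b <- u * a :: s) b by rewrite !big_cons mulrA.
have atoms b : b \in u * a :: s -> atom_in S b.
  rewrite inE => /predU1P[->|bs]; last by apply: s_atoms; rewrite inE bs orbT.
  by apply: atom_in_unitM => //; apply: s_atoms; rewrite mem_head.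
rewrite Ex in x_nu *; split=> //; last by exists (u * a :: s).
- by rewrite big_seq; apply: big_ind => // b /atoms[].
- by rewrite prodf_seq_neq0; apply/allP => b /atoms[].
Qed.

Lemma atomic_unitM u x : unit_in S u -> atomic_elt_in S x -> atomic_elt_in S (u * x).
Proof.
move=> Su_u x_at; apply: factorable_atomic.
  exact: factorable_mul (factorable_unit Su_u) (atomic_factorable x_at).
have [v Su_v vu] := unit_inV Su_u; case: x_at => _ _ x_nu _ Su_ux; apply: x_nu.
by have := unit_inM Su_v Su_ux; rewrite mulrA vu mul1r.
Qed.

Lemma completely_atomic_factorable x y : completely_atomic S ->
  factorable_in x -> S y -> (exists2 z, S z & x = y * z) -> factorable_in y.
Proof.
move=> S_ca x_fact Sy [z Sz xyz].
have [Su_y|y_nu] := classic (unit_in S y); first exact: factorable_unit.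
apply/atomic_factorable/(S_ca x) => //; last by exists z.
apply: factorable_atomic => // Su_x; apply: y_nu.
by apply: (unit_inMl Sy Sz); rewrite -xyz.
Qed.

End Factorization.

Lemma mul_closed_True (T : idomainType) : mul_closed (fun _ : T => True).
Proof. by []. Qed.

Lemma unit_in_True (T : idomainType) (x : T) :
  unit_in (fun _ => True) x <-> x \is a GRing.unit.
Proof.
split=> [[_ [y _ xy]]|xu]; first by apply/unitrPr; exists y.
by split=> //; exists x^-1; rewrite ?mulrV.
Qed.

Section KplusM.
Variables (T : idomainType) (K M : T -> Prop).
Hypotheses (K_subfield : is_subfield K) (M_ideal : is_ideal M) (M_proper : ~ M 1).
Hypothesis T_eq_KM : forall t, set_add K M t.

Local Notation TT := (fun _ : T => True).

Let K_1 : K 1. Proof. by case: K_subfield => -[]. Qed.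
Let K_sub x y : K x -> K y -> K (x - y). Proof. by case: K_subfield => -[_ + _] _; apply. Qed.
Let K_mul x y : K x -> K y -> K (x * y). Proof. by case: K_subfield => -[_ _ +] _; apply. Qed.
Let K_0 : K 0. Proof. by rewrite -(subrr 1); apply: K_sub. Qed.

Let K_unit k : K k -> k != 0 -> k \is a GRing.unit /\ K k^-1.
Proof.
move=> Kk k0; have [l Kl kl] := K_subfield.2 k Kk k0.
have ku : k \is a GRing.unit by apply/unitrPr; exists l.
by split=> //; rewrite -[k^-1]mulr1 -kl mulKr.
Qed.

Let M_0 : M 0. Proof. by case: M_ideal. Qed.
Let M_add x y : M x -> M y -> M (x + y). Proof. by case: M_ideal => _ + _; apply. Qed.
Let M_mull r x : M x -> M (r * x). Proof. by case: M_ideal => _ _; apply. Qed.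
Let M_mulr x r : M x -> M (x * r). Proof. by rewrite mulrC; apply: M_mull. Qed.
Let M_sub x y : M x -> M y -> M (x - y).
Proof. by move=> Mx My; apply: M_add => //; rewrite -mulN1r; apply: M_mull. Qed.

Lemma K_M_eq0 k : K k -> M k -> k = 0.
Proof.
move=> Kk Mk; apply/eqP; apply: contraT => k0; case: M_proper.
by have [ku Kk'] := K_unit Kk k0; rewrite -(mulrV ku); apply: M_mulr.
Qed.

Definition res (t : T) : T := epsilon (inhabits 0) (fun k => K k /\ M (t - k)).

Lemma res_spec t : K (res t) /\ M (t - res t).
Proof.
apply: (epsilon_spec (inhabits 0) (fun k => K k /\ M (t - k))).
by have [k [m [Kk Mm ->]]] := T_eq_KM t; exists k; rewrite [k + m]addrC addrK.
Qed.

Lemma res_in_K t : K (res t). Proof. exact: (res_spec t).1. Qed.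

Lemma res_uniq t k : K k -> M (t - k) -> res t = k.
Proof.
move=> Kk Mtk; apply/subr0_eq/K_M_eq0; first exact: K_sub (res_in_K t) Kk.
have -> : res t - k = (t - k) - (t - res t) by ring.
by apply: M_sub => //; exact: (res_spec t).2.
Qed.

Lemma res_id k : K k -> res k = k.
Proof. by move=> Kk; apply: res_uniq; rewrite ?subrr. Qed.

Lemma res1 : res 1 = 1.
Proof. exact: res_id. Qed.

Lemma resM s t : res (s * t) = res s * res t.
Proof.
apply: res_uniq; first exact: K_mul (res_in_K s) (res_in_K t).
have -> : s * t - res s * res t = (s - res s) * t + res s * (t - res t) by ring.
by apply: M_add; [apply: M_mulr | apply: M_mull]; exact: (res_spec _).2.
Qed.

Lemma resKM k t : K k -> res (k * t) = k * res t.
Proof. by move=> Kk; rewrite resM res_id. Qed.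

Lemma res_prod (s : seq T) : res (\prod_(a <- s) a) = \prod_(a <- s) res a.
Proof. by apply: (big_morph res resM res1). Qed.

Lemma res_eq0 t : res t = 0 <-> M t.
Proof.
split=> [rt0|Mt]; last by apply: res_uniq; rewrite ?subr0.
by have := (res_spec t).2; rewrite rt0 subr0.
Qed.

Lemma res_unit_neq0 x : x \is a GRing.unit -> res x != 0.
Proof.
move=> xu; apply/eqP => rx0; case: M_proper.
by rewrite -(mulrV xu); apply/res_eq0; rewrite resM rx0 mul0r.
Qed.

Lemma res_normalize x : res x != 0 -> exists2 x1, res x1 = 1 & x = res x * x1.
Proof.
move=> rx0; have [rxu Krx'] := K_unit (res_in_K x) rx0.
by exists ((res x)^-1 * x); rewrite ?resKM ?mulVr ?mulVKr.
Qed.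

Variable D : T -> Prop.
Hypotheses (D_subring : is_subring D) (D_sub_K : forall x, D x -> K x).

Let D_1 : D 1. Proof. by case: D_subring. Qed.
Let D_mul x y : D x -> D y -> D (x * y). Proof. by case: D_subring => _ _; apply. Qed.
Let D_0 : D 0. Proof. by case: D_subring => _ + _ => /(_ 1 1 D_1 D_1); rewrite subrr. Qed.

Definition R (x : T) : Prop := D (res x).

Lemma DplusM_eq : set_add D M = R.
Proof.
apply: functional_extensionality => x; apply: propositional_extensionality; split.
  by move=> [d [m [Dd Mm ->]]]; rewrite /R (res_uniq (D_sub_K Dd)) // [d + m]addrC addrK.
move=> Rx; exists (res x), (x - res x); split=> //; first exact: (res_spec x).2.
by rewrite addrC subrK.
Qed.

Lemma R_closed : mul_closed R.
Proof. by split=> [|x y]; rewrite /R ?res1 ?resM //; apply: D_mul. Qed.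

Lemma unit_in_R x : unit_in R x <-> x \is a GRing.unit /\ unit_in D (res x).
Proof.
split=> [[Rx [y Ry xy]]|[xu [Rx [e De rxe]]]].
  split; first by apply/unitrPr; exists y.
  by split=> //; exists (res y); rewrite // -resM xy res1.
split=> //; exists x^-1; last exact: mulrV.
rewrite /R (_ : res x^-1 = e) //.
by apply: (mulfI (res_unit_neq0 xu)); rewrite -resM mulrV // res1 rxe.
Qed.

Lemma unit_in_R_res1 x : res x = 1 -> unit_in R x <-> x \is a GRing.unit.
Proof.
move=> rx1; rewrite unit_in_R rx1; split=> [[]//|xu]; split=> //.
by split=> //; exists 1; rewrite ?mulr1.
Qed.

Lemma R_rebalance b c : R (b * c) -> exists k, [/\ K k, k != 0, R (k * b) & R (k^-1 * c)].
Proof.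
rewrite /R => Rbc; have [rc0|rc0] := eqVneq (res c) 0; last first.
  have [rcu Krc'] := K_unit (res_in_K c) rc0.
  exists (res c); split=> //; first exact: res_in_K.
    by rewrite resKM; [rewrite mulrC -resM | exact: res_in_K].
  by rewrite resKM // mulVr.
have [rb0|rb0] := eqVneq (res b) 0.
  by exists 1; rewrite ?oner_neq0 ?invr1 !mul1r ?rb0 ?rc0.
have [rbu Krb'] := K_unit (res_in_K b) rb0.
exists (res b)^-1; split=> //; first by rewrite invr_neq0.
  by rewrite resKM // mulVr.
by rewrite invrK resKM ?rc0 ?mulr0 //; exact: res_in_K.
Qed.

Lemma atom_in_R_res1 u : res u = 1 -> atom_in R u <-> atom_in TT u.
Proof.
move=> ru1; have Ru : R u by rewrite /R ru1.
split=> [[_ u0 u_nu u_irr]|[_ u0 u_nu u_irr]]; split=> //.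
- by move/unit_in_True/(unit_in_R_res1 ru1).
- move=> b c _ _ ubc.
  have rbc : res c * res b = 1 by rewrite mulrC -resM -ubc.
  have Rcb : R (res c * b) by rewrite /R resKM ?rbc //; exact: res_in_K.
  have Rbc : R (res b * c) by rewrite /R resKM; [rewrite mulrC rbc | exact: res_in_K].
  have : u = (res c * b) * (res b * c) by rewrite mulrACA rbc mul1r.
  case/(u_irr _ _ Rcb Rbc) => /unit_in_R[+ _]; rewrite unitrM => /andP[_ ?];
    [left|right]; exact/unit_in_True.
- by move/unit_in_R => [/unit_in_True].
- move=> b c Rb Rc ubc.
  have rbc : res b * res c = 1 by rewrite -resM -ubc.
  case: (u_irr b c I I ubc) => /unit_in_True ?; [left|right]; apply/unit_in_R; split=> //.
    by split=> //; exists (res c).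
  by split=> //; exists (res b); rewrite // mulrC.
Qed.

Lemma scale_into_R t : exists2 k, K k /\ k != 0 & R (k * t).
Proof.
have [rt0|rt0] := eqVneq (res t) 0.
  by exists 1; rewrite ?oner_neq0 // /R mul1r rt0.
have [rtu Krt'] := K_unit (res_in_K t) rt0.
by exists (res t)^-1; rewrite ?invr_neq0 // /R resKM // mulVr.
Qed.

Lemma prod_atoms_rebalance (s : seq T) k : s != [::] ->
  (forall a, a \in s -> atom_in TT a) -> K k -> k != 0 -> R (k * \prod_(a <- s) a) ->
  exists s', [/\ s' != [::], forall a, a \in s' -> atom_in TT a /\ R a
              & k * \prod_(a <- s) a = \prod_(a <- s') a].
Proof.
elim: s k => [//|a s IH] k _ s_atoms Kk k0; rewrite big_cons mulrA => Rx.
have [ku _] := K_unit Kk k0.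
have ka_at : atom_in TT (k * a).
  apply: (atom_in_unitM (mul_closed_True T)); first exact/unit_in_True.
  by apply: s_atoms; rewrite mem_head.
have [s0|s_n0] := eqVneq s [::].
  rewrite s0 big_nil mulr1 in Rx *; exists [:: k * a]; rewrite big_seq1.
  by split=> // b; rewrite inE => /eqP ->.
have [j [Kj j0 Rjka Rrest]] := R_rebalance Rx.
have [ju Kj'] := K_unit Kj j0.
have s_atoms' b : b \in s -> atom_in TT b by move=> bs; apply: s_atoms; rewrite inE bs orbT.
have [s' [s'_n0 s'_atoms E]] := IH _ s_n0 s_atoms' Kj' (invr_neq0 j0) Rrest.
exists (j * (k * a) :: s'); split=> //.
  move=> b; rewrite inE => /predU1P[->|/s'_atoms//]; split=> //.
  by apply: (atom_in_unitM (mul_closed_True T) _ ka_at); exact/unit_in_True.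
by rewrite big_cons -E mulrACA mulrV // mul1r.
Qed.

Lemma atom_in_D_R d : atom_in D d -> atom_in R d.
Proof.
move=> [Dd d0 d_nu d_irr]; have rd : res d = d := res_id (D_sub_K Dd).
have [du _] := K_unit (D_sub_K Dd) d0.
split=> //; first by rewrite /R rd.
  by case/unit_in_R => _; rewrite rd.
move=> b c Rb Rc dbc; move: du; rewrite dbc unitrM => /andP[bu cu].
have : d = res b * res c by rewrite -resM -dbc rd.
by case/(d_irr _ _ Rb Rc) => ?; [left|right]; apply/unit_in_R.
Qed.

Lemma factorable_in_R_of_D e : atomic_domain D -> D e -> e != 0 -> factorable_in R e.
Proof.
move=> D_atomic De e0; have Ke := D_sub_K De.
have [De_u|e_nu] := classic (unit_in D e).
  apply: factorable_unit; apply/unit_in_R; rewrite res_id //.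
  by split=> //; exact: (K_unit Ke e0).1.
have [_ _ _ [s [_ s_atoms ->]]] := D_atomic e De e0 e_nu.
by apply: (factorable_prod R_closed) => a /s_atoms/atom_in_D_R/(factorable_atom R_closed).
Qed.

Lemma factorable_in_R_res1 x : res x = 1 -> factorable_in TT x -> factorable_in R x.
Proof.
move=> rx1 [u [s [/unit_in_True uu s_atoms Ex]]].
set p := \prod_(a <- s) a in Ex.
have rp0 : res p != 0.
  by move: (oner_neq0 T); rewrite -rx1 Ex resM mulf_eq0 negb_or => /andP[].
have ra0 a : a \in s -> res a != 0.
  by move: rp0; rewrite res_prod prodf_seq_neq0 => /allP/[apply].
have [rpu _] := K_unit (res_in_K p) rp0.
exists (u * res p), [seq (res a)^-1 * a | a <- s]; split.
- apply/unit_in_R_res1; first by rewrite resM (res_id (res_in_K p)) -resM -Ex.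
  by rewrite unitrM uu.
- move=> _ /mapP[a a_s ->]; have [rau Kra'] := K_unit (res_in_K a) (ra0 a a_s).
  apply/atom_in_R_res1; first by rewrite resKM // mulVr.
  apply: (atom_in_unitM (mul_closed_True T) _ (s_atoms a a_s)).
  by apply/unit_in_True; rewrite unitrV.
- rewrite Ex big_map big_seq big_split /= prodrV -?big_seq; last first.
    by move=> a a_s; exact: (K_unit (res_in_K a) (ra0 a a_s)).1.
  by rewrite -res_prod -/p -mulrA mulVKr.
Qed.

Section DField.
Hypothesis D_field : is_field D.

Lemma unit_in_R_field x : R x -> unit_in R x <-> x \is a GRing.unit.
Proof.
move=> Rx; rewrite unit_in_R; split=> [[]//|xu]; split=> //; split=> //.
exact: D_field Rx (res_unit_neq0 xu).
Qed.

Lemma atom_in_R_field a : R a -> atom_in R a <-> atom_in TT a.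
Proof.
move=> Ra; split=> [[_ a0 a_nu a_irr]|[_ a0 a_nu a_irr]]; split=> //.
- by move/unit_in_True/(unit_in_R_field Ra).
- move=> b c _ _ abc; rewrite abc in Ra.
  have [k [Kk k0 Rkb Rkc]] := R_rebalance Ra; have [ku _] := K_unit Kk k0.
  have : a = (k * b) * (k^-1 * c) by rewrite mulrACA mulrV // mul1r.
  case/(a_irr _ _ Rkb Rkc) => /unit_in_R[+ _]; rewrite unitrM => /andP[_ ?];
    [left|right]; exact/unit_in_True.
- by move/(unit_in_R_field Ra)/unit_in_True.
- move=> b c Rb Rc abc.
  by case: (a_irr b c I I abc) => /unit_in_True ?; [left|right]; apply/unit_in_R_field.
Qed.

Lemma atomic_in_R_field x : R x -> atomic_elt_in R x <-> atomic_elt_in TT x.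
Proof.
move=> Rx; split=> [[_ x0 x_nu [s [s_n0 s_atoms Ex]]]|[_ x0 x_nu [s [s_n0 s_atoms Ex]]]].
  split=> //; first by move/unit_in_True/(unit_in_R_field Rx).
  exists s; split=> // a /s_atoms a_at; have [Ra _ _ _] := a_at.
  exact/(atom_in_R_field Ra).
have := prod_atoms_rebalance s_n0 s_atoms K_1 (oner_neq0 T).
rewrite mul1r -Ex => /(_ Rx)[s' [s'_n0 s'_atoms E]].
split=> //; first by move/(unit_in_R_field Rx)/unit_in_True.
by exists s'; split=> // a /s'_atoms[a_at Ra]; apply/atom_in_R_field.
Qed.

Lemma completely_atomic_R_of_T : completely_atomic TT -> completely_atomic R.
Proof.
move=> T_ca x y x_at Ry y_nu [z Rz xyz]; have [Rx _ _ _] := x_at.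
apply/(atomic_in_R_field Ry)/(T_ca x) => //; last by exists z.
- exact/(atomic_in_R_field Rx).
- by move/unit_in_True/(unit_in_R_field Ry).
Qed.

Lemma completely_atomic_T_of_R : completely_atomic R -> completely_atomic TT.
Proof.
move=> R_ca x y x_at _ y_nu [z _ xyz].
have [ky [Kky ky0] Rky] := scale_into_R y; have [kyu _] := K_unit Kky ky0.
have [kz [Kkz kz0] Rkz] := scale_into_R z; have [kzu _] := K_unit Kkz kz0.
have x'_at : atomic_elt_in TT (ky * kz * x).
  by apply: (atomic_unitM (mul_closed_True T)) x_at; apply/unit_in_True; rewrite unitrM kyu.
have Ex' : ky * kz * x = (ky * y) * (kz * z) by rewrite xyz mulrACA.
have y'_at : atomic_elt_in R (ky * y).
  apply: (R_ca (ky * kz * x)) => //; last by exists (kz * z).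
  - by apply/atomic_in_R_field => //; rewrite Ex'; apply: R_closed.2.
  - by case/unit_in_R; rewrite unitrM kyu => /unit_in_True.
rewrite -(mulKr kyu y); apply: (atomic_unitM (mul_closed_True T)).
  by apply/unit_in_True; rewrite unitrV.
exact/(atomic_in_R_field Rky).
Qed.

End DField.

Section DNotField.
Hypothesis D_not_field : ~ is_field D.

Lemma exists_nonunit_D : exists d, [/\ D d, d != 0 & ~ unit_in D d].
Proof.
apply: NNPP => no_d; apply: D_not_field => x Dx x0.
apply: NNPP => x_nu; apply: no_d; exists x; split=> // -[_ ?]; exact: x_nu.
Qed.

Lemma atom_in_R_res_neq0 a : atom_in R a -> res a != 0.
Proof.
move=> [Ra a0 a_nu a_irr]; apply/eqP => ra0.
have [d [Dd d0 d_nu]] := exists_nonunit_D; have Kd := D_sub_K Dd.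
have [du Kd'] := K_unit Kd d0.
have Rd : R d by rewrite /R res_id.
have Rda : R (d^-1 * a) by rewrite /R resKM // ra0 mulr0.
have : a = d * (d^-1 * a) by rewrite mulVKr.
case/(a_irr _ _ Rd Rda) => /unit_in_R[]; first by rewrite res_id.
by move=> /res_unit_neq0; rewrite resKM // ra0 mulr0 eqxx.
Qed.

Lemma atom_in_R_factorable_T a : atom_in R a -> factorable_in TT a.
Proof.
move=> a_at; have ra0 := atom_in_R_res_neq0 a_at; have [Ra _ _ a_irr] := a_at.
have [a1 ra1 Ea] := res_normalize ra0; have [rau _] := K_unit (res_in_K a) ra0.
have Rra : R (res a) by rewrite /R res_id //; exact: res_in_K.
have Ra1 : R a1 by rewrite /R ra1.
rewrite Ea; apply: (factorable_mul (mul_closed_True T)).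
  by apply: factorable_unit; apply/unit_in_True.
case: (a_irr _ _ Rra Ra1 Ea) => [Rra_u|/unit_in_R[a1u _]].
  apply: (factorable_atom (mul_closed_True T)); apply/atom_in_R_res1 => //.
  have [v Rv_u vra] := unit_inV Rra_u.
  by have := atom_in_unitM R_closed Rv_u a_at; rewrite {1}Ea mulrA vra mul1r.
by apply: factorable_unit; apply/unit_in_True.
Qed.

Lemma atomic_in_R_factorable_T x : atomic_elt_in R x -> factorable_in TT x.
Proof.
move=> [_ _ _ [s [_ s_atoms ->]]]; apply: (factorable_prod (mul_closed_True T)).
by move=> a /s_atoms/atom_in_R_factorable_T.
Qed.

Lemma atomic_in_R_res_neq0 x : atomic_elt_in R x -> res x != 0.
Proof.
move=> [_ _ _ [s [_ s_atoms ->]]]; rewrite res_prod prodf_seq_neq0.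
by apply/allP => a /s_atoms/atom_in_R_res_neq0.
Qed.

Lemma completely_atomic_R_not_field :
  atomic_domain D -> completely_atomic TT -> completely_atomic R.
Proof.
move=> D_atomic T_ca x y x_at Ry y_nu [z Rz xyz].
have ry0 : res y != 0.
  by move: (atomic_in_R_res_neq0 x_at); rewrite xyz resM mulf_eq0 negb_or => /andP[].
have [y1 ry1 Ey] := res_normalize ry0.
apply: (factorable_atomic R_closed) y_nu; rewrite Ey.
apply: (factorable_mul R_closed); first exact: factorable_in_R_of_D.
apply: factorable_in_R_res1 ry1 _.
have x_fact := atomic_in_R_factorable_T x_at.
apply: (completely_atomic_factorable (mul_closed_True T) T_ca x_fact) => //.
by exists (res y * z) => //; rewrite xyz {1}Ey mulrAC mulrC.
Qed.

End DNotField.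
End KplusM.

Theorem theorem3p1 (T : idomainType) (K M D : T -> Prop) :
  is_subfield K ->
  is_maximal_ideal M ->
  (exists m, M m /\ m != 0) ->
  (forall t : T, set_add K M t) ->
  is_subring D -> (forall x, D x -> K x) ->
  (is_field D ->
     (completely_atomic (set_add D M) <-> completely_atomic (fun _ : T => True)))
  /\
  (~ is_field D -> atomic_domain D -> completely_atomic (fun _ : T => True) ->
     completely_atomic (set_add D M)).
Proof.
move=> K_subfield [M_ideal M_proper _] _ T_eq_KM D_subring D_sub_K.
rewrite (DplusM_eq K_subfield M_ideal M_proper T_eq_KM D_sub_K).
split=> [D_field|]; last exact: completely_atomic_R_not_field.
by split; [exact: completely_atomic_T_of_R | exact: completely_atomic_R_of_T].
Qed.
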